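(* Let $p$ be a prime number, $N\ge 1$ and $n\ge 0$ integers, and $t=\mathrm{ord}_p(N-1)$. Then $$\prod_{k=0}^{n}\frac{(N+k)!}{N!}\,B_{N,n}\equiv \prod_{k=0}^{n}(1+k)!\ B_n \pmod{p^t}.$$
   Context: For a positive integer $N$, the hypergeometric Bernoulli numbers $B_{N,n}$ are defined by $\frac{x^N/N!}{e^x-\sum_{n=0}^{N-1}x^n/n!}=\sum_{n\ge0} B_{N,n}\frac{x^n}{n!}$, and the classical Bernoulli numbers $B_n$ by $\frac{x}{e^x-1}=\sum_{n\ge0}B_n\frac{x^n}{n!}$ (so $B_n=B_{1,n}$). $\mathrm{ord}_p$ denotes the $p$-adic valuation on $\mathbb{Q}$ (with $\mathrm{ord}_p(0)=\infty$); for rationals $a,b$, $a\equiv b\pmod{p^t}$ means $\mathrm{ord}_p(a-b)\ge t$. *)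

From mathcomp Require Import all_boot all_order all_algebra.
Set Implicit Arguments. Unset Strict Implicit. Unset Printing Implicit Defensive.
Import Order.TTheory GRing.Theory Num.Theory.
Local Open Scope ring_scope.

(* [is_hbern N B] : B n = B_{N,n} for all n, i.e. the exponential generating
   function of B satisfies
     (x^N/N!) = (e^x - sum_{n<N} x^n/n!) * sum_n B n x^n/n!.
   Since e^x - sum_{n<N} x^n/n! = sum_{m>=0} x^(N+m)/(N+m)!, comparing the
   coefficients of x^(N+j) (all lower coefficients vanish on both sides)
   this identity of formal power series is literally:
     for all j, sum_{n=0}^{j} B n / ((N+j-n)! n!) = [j = 0] / N!. *)
Definition is_hbern (N : nat) (B : nat -> rat) : Prop :=
  forall j : nat,
    \sum_(n < j.+1) B n / (((N + (j - n))`!)%:R * (n`!)%:R)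
    = (j == 0%N)%:R / (N`!)%:R.

Definition is_bern (B : nat -> rat) : Prop := is_hbern 1 B.

(* p-adic valuation on Q: None stands for +infinity (ord_p 0 = oo). *)
Definition ordq (p : nat) (q : rat) : option int :=
  if q == 0 then None
  else Some ((logn p `|numq q|)%:Z - (logn p `|denq q|)%:Z).

Definition ord_ge (v t : option int) : Prop :=
  match t, v with
  | None, None => True
  | None, Some _ => False
  | Some _, None => True
  | Some t', Some v' => (t' <= v')%R
  end.

Definition congr_pt (p : nat) (t : option int) (a b : rat) : Prop :=
  ord_ge (ordq p (a - b)) t.

(* Put D_{N,j} = prod_{k<=j} (N+k)!/N!.  Clearing denominators in the defining
   convolution of B_{N,.} gives the recurrence
     D_{N,j} B_{N,j} = - sum_{m<j} c_{N,j,m} D_{N,m} B_{N,m}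
   with natural coefficients c_{N,j,m} that are products of falling factorials
   of N + k, hence depend on N only modulo any d.  By strong induction the
   integers D_{N,j} B_{N,j} and D_{M,j} B_{M,j} are congruent modulo d
   whenever N = M (mod d); the theorem is the case M = 1, d = N - 1. *)

From mathcomp Require Import all_boot all_order all_algebra.
From mathcomp Require Import ring.
Import Order.TTheory GRing.Theory Num.Theory.
Local Open Scope ring_scope.

Lemma natr_fact_neq0 a : ((a`!)%:R : rat) != 0.
Proof. by rewrite pnatr_eq0 -lt0n fact_gt0. Qed.

Section HbernScale.

Variable N : nat.

Definition hbern_scale (j : nat) : nat := (\prod_(k < j.+1) (N + k) ^_ k)%N.

Definition hbern_coef (j m : nat) : nat :=
  (j ^_ (j - m) * (N + j) ^_ m * \prod_(m.+1 <= k < j) (N + k) ^_ k)%N.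

Lemma hbern_scale0 : hbern_scale 0 = 1%N.
Proof. by rewrite /hbern_scale big_ord1 ffactn0. Qed.

Lemma hbern_scaleE j :
  (hbern_scale j)%:R = \prod_(k < j.+1) (((N + k)`!)%:R / ((N`!)%:R : rat)).
Proof.
rewrite /hbern_scale natr_prod; apply: eq_bigr => k _.
by rewrite -(ffact_fact (leq_addl N k)) addnK natrM mulfK ?natr_fact_neq0.
Qed.

Lemma hbern_coefE {j m : nat} : (m < j)%N ->
  (hbern_coef j m * hbern_scale m * ((N + (j - m))`! * m`!)
   = hbern_scale j * (N`! * j`!))%N.
Proof.
move=> lt_mj; set P := (\prod_(m.+1 <= k < j) (N + k) ^_ k)%N.
have scale_split : hbern_scale j = (hbern_scale m * P * (N + j) ^_ j)%N.
  rewrite /hbern_scale -!(big_mkord xpredT (fun k => (N + k) ^_ k)).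
  rewrite (@big_cat_nat _ _ _ m.+1) ?leq0n // 1?ltnW //=.
  by rewrite [in X in (_ * X)%N]big_nat_recr //= mulnA.
have fact_j : (j ^_ (j - m) * m`! = j`!)%N.
  by rewrite -{2}(subKn (ltnW lt_mj)) ffact_fact ?leq_subr.
have fact_Nj_m : ((N + j) ^_ m * (N + (j - m))`! = (N + j)`!)%N.
  rewrite addnBA ?ffact_fact 1?ltnW //.
  exact: leq_trans lt_mj (leq_addl _ _).
have fact_Nj_j : ((N + j) ^_ j * N`! = (N + j)`!)%N.
  by rewrite -{2}(addnK j N) ffact_fact ?leq_addl.
transitivity (hbern_scale m * P
  * ((N + j) ^_ m * (N + (j - m))`!) * (j ^_ (j - m) * m`!))%N.
  by rewrite /hbern_coef -/P; ring.
by rewrite fact_Nj_m -fact_Nj_j fact_j scale_split; ring.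
Qed.

End HbernScale.

Section HbernRecurrence.

Context {N : nat} {B : nat -> rat}.
Hypothesis hbB : is_hbern N B.

Lemma hbern0 : B 0 = 1.
Proof.
have := hbB 0; rewrite big_ord1 /= addn0 mulr1 => hb0.
by rewrite -[B 0](divfK (natr_fact_neq0 N)) hb0 mul1r mulVf ?natr_fact_neq0.
Qed.

Lemma hbern_rec {j : nat} : (0 < j)%N ->
  (hbern_scale N j)%:R * B j
  = - \sum_(m < j) (hbern_coef N j m)%:R * ((hbern_scale N m)%:R * B m).
Proof.
move=> j_gt0; have := hbB j.
rewrite big_ord_recr /= subnn addn0 (negbTE (lt0n_neq0 j_gt0)) mul0r.
set K : rat := (hbern_scale N j * (N`! * j`!))%:R.
move/(congr1 (fun x => K * x)); rewrite mulr0 mulrDr mulr_sumr => hbj.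
apply/eqP; rewrite -addr_eq0 addrC; apply/eqP; rewrite -[RHS]hbj; congr (_ + _).
  apply: eq_bigr => m _; rewrite /K -(hbern_coefE N (ltn_ord m)) !natrM.
  by field; rewrite !natr_fact_neq0.
by rewrite /K !natrM; field; rewrite !natr_fact_neq0.
Qed.

End HbernRecurrence.

Lemma modnM_congr d a b c e :
  a = b %[mod d] -> c = e %[mod d] -> (a * c = b * e %[mod d])%N.
Proof. by move=> eq_ab eq_ce; rewrite -modnMm eq_ab eq_ce modnMm. Qed.

Lemma ffact_addl_mod {d N M a b : nat} : N = M %[mod d] -> (b <= a.+1)%N ->
  (N + a) ^_ b = (M + a) ^_ b %[mod d].
Proof.
move=> eqNM; elim: b a => [|b IHb] a le_ba; first by rewrite !ffactn0.
case: a le_ba => [|a] le_ba.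
  by case: b {IHb} le_ba => // _; rewrite !addn0 !ffactn1.
rewrite !addnS !ffactSS; apply: modnM_congr; last exact: IHb.
by rewrite -!addnS -modnDml eqNM modnDml.
Qed.

Lemma hbern_coef_mod d N M j m : N = M %[mod d] -> (m < j)%N ->
  hbern_coef N j m = hbern_coef M j m %[mod d].
Proof.
move=> eqNM lt_mj; rewrite /hbern_coef; apply: modnM_congr.
  by apply: modnM_congr => //; apply: ffact_addl_mod; rewrite // ltnW // ltnW.
apply: (big_ind2 (fun x y => x = y %[mod d])) => // [x1 y1 x2 y2|k _].
  exact: modnM_congr.
exact: ffact_addl_mod.
Qed.

Definition int_eqmod (d : int) (x y : rat) : Prop :=
  exists z w : int, [/\ x = z%:~R, y = w%:~R & (z = w %[mod d])%Z].

Lemma int_eqmod_nat (d a b : nat) : a = b %[mod d] -> int_eqmod d a%:R b%:R.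
Proof. by move=> eq_ab; exists a, b; rewrite -!pmulrn !modz_nat eq_ab. Qed.

Section IntEqmod.

Variable d : int.

Lemma int_eqmodD x1 y1 x2 y2 :
  int_eqmod d x1 y1 -> int_eqmod d x2 y2 -> int_eqmod d (x1 + x2) (y1 + y2).
Proof.
move=> [z1 [w1 [-> -> e1]]] [z2 [w2 [-> -> e2]]].
by exists (z1 + z2), (w1 + w2); rewrite !intrD -modzDm e1 e2 modzDm.
Qed.

Lemma int_eqmodN x y : int_eqmod d x y -> int_eqmod d (- x) (- y).
Proof.
by move=> [z [w [-> -> e]]]; exists (- z), (- w); rewrite !intrN -modzNm e modzNm.
Qed.

Lemma int_eqmodM x1 y1 x2 y2 :
  int_eqmod d x1 y1 -> int_eqmod d x2 y2 -> int_eqmod d (x1 * x2) (y1 * y2).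
Proof.
move=> [z1 [w1 [-> -> e1]]] [z2 [w2 [-> -> e2]]].
by exists (z1 * z2), (w1 * w2); rewrite !intrM -modzMm e1 e2 modzMm.
Qed.

End IntEqmod.

Lemma hbern_scaled_eqmod (d N M : nat) (B B' : nat -> rat) :
  N = M %[mod d] -> is_hbern N B -> is_hbern M B' ->
  forall j, int_eqmod d ((hbern_scale N j)%:R * B j) ((hbern_scale M j)%:R * B' j).
Proof.
move=> eqNM hbB hbB'; elim/ltn_ind => j IHj.
have [->|j_gt0] := posnP j.
  by rewrite !hbern_scale0 (hbern0 hbB) (hbern0 hbB') mulr1; exists 1, 1.
rewrite (hbern_rec hbB j_gt0) (hbern_rec hbB' j_gt0); apply: int_eqmodN.
apply: (big_ind2 (int_eqmod d)) => [|x1 x2 y1 y2|m _]; first by exists 0, 0.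
  exact: int_eqmodD.
apply: int_eqmodM; last exact: IHj.
exact/int_eqmod_nat/hbern_coef_mod.
Qed.

Lemma ordq_int p (z : int) :
  ordq p z%:~R = if z == 0 then None else Some (logn p `|z|)%:Z.
Proof. by rewrite /ordq intr_eq0 numq_int denq_int logn1 subr0. Qed.

Lemma congr_pt_int_eqmod p (d : int) x y :
  int_eqmod d x y -> congr_pt p (ordq p d%:~R) x y.
Proof.
move=> [z [w [-> -> /eqP]]]; rewrite eqz_mod_dvd /congr_pt -intrB.
move: (z - w) => v dvd_v; rewrite !ordq_int.
have [_|nz_v] := eqVneq v 0; first by case: (d == 0).
have nz_d : d != 0 by apply: contraNneq nz_v => d0; rewrite -dvd0z -d0.
by rewrite (negbTE nz_d) /= lez_nat dvdn_leq_log ?absz_gt0.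
Qed.

Theorem lemma1 (p N n : nat) (B Bc : nat -> rat) :
  prime p -> (1 <= N)%N ->
  is_hbern N B -> is_bern Bc ->
  congr_pt p (ordq p ((N%:R : rat) - 1))
    ((\prod_(k < n.+1) (((N + k)`!)%:R / (N`!)%:R)) * B n)
    ((\prod_(k < n.+1) (((1 + k)`!)%:R : rat)) * Bc n).
Proof.
move=> _ N_ge1 hbB hbBc.
have eqN1 : N = 1 %[mod N - 1] by rewrite -{1}(subnK N_ge1) modnDl.
have -> : (N%:R : rat) - 1 = ((N - 1)%N%:Z)%:~R by rewrite -pmulrn natrB.
have scale1 : (hbern_scale 1 n)%:R = \prod_(k < n.+1) (((1 + k)`!)%:R : rat).
  by rewrite hbern_scaleE; apply: eq_bigr => k _; rewrite divr1.
rewrite -hbern_scaleE -scale1.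
exact/congr_pt_int_eqmod/hbern_scaled_eqmod.
Qed.
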